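(* Fix $\varepsilon\in(0,1/2)$ and, for each integer $K\ge 2$, let $c=c(K)$ and $r=r(K)$ be positive integers satisfying \[ \left|\frac{c(K)}{K}-\left(1-\sqrt{1-2\varepsilon}\right)\right|<K^{-1/4},\qquad \left|\frac{r(K)}{K}-\left(1-\sqrt{1-2\varepsilon}\right)\right|<K^{-1/4}. \] Then \[ \lim_{K\to\infty}\left(1+\sum_{\ell=0}^{2K-2}\frac{K-c}{(\ell+1)K-h(\ell+1)}\prod_{t=1}^{\ell}\frac{K-r\,\mathbf 1_{\{t\text{ odd}\}}-c\,\mathbf 1_{\{t\text{ even}\}}-\lfloor t/2\rfloor}{tK-h(t)}\right)=\exp\left\{\sqrt{1-2\varepsilon}\right\}, \] where the empty product (for $\ell=0$) equals $1$.
   Context: For a positive integer $t$, $h(t)=\sum_{i=1}^{t}\lfloor i/2\rfloor$. *)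

From Stdlib Require Import Reals Lra Lia Arith.
Open Scope R_scope.

Fixpoint h (t : nat) : nat :=
  match t with
  | O => O
  | S t' => (h t' + Nat.div (S t') 2)%nat
  end.

Fixpoint prod1 (f : nat -> R) (l : nat) : R :=
  match l with
  | O => 1
  | S l' => prod1 f l' * f (S l')
  end.

Definition ind_odd (t : nat) : R := if Nat.odd t then 1 else 0.
Definition ind_even (t : nat) : R := if Nat.even t then 1 else 0.

Definition fac (K c r t : nat) : R :=
  (INR K - INR r * ind_odd t - INR c * ind_even t - INR (Nat.div t 2))
  / (INR t * INR K - INR (h t)).

Definition expr (K c r : nat) : R :=
  1 + sum_f_R0 (fun l =>
        (INR K - INR c) / (INR (l + 1) * INR K - INR (h (l + 1)))
        * prod1 (fac K c r) l) (2 * K - 2).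

From Stdlib Require Import Reals Factorial Lra Lia ZifyNat.
From Coquelicot Require Import Rcomplements Rbar Hierarchy Lim_seq.
Open Scope R_scope.

(* Write s = sqrt (1 - 2 eps) and count the leading 1 of [expr] as summand 0.
   Summand l is a product of l factors (K - x_t) / (tK - h(t)), t = 1..l, with
   x_t / K -> 1 - s, so it tends to s/1 * ... * s/l = s^l / l!.  Since
   4 h(t) <= t^2, the denominators are at least tK/2 for t <= 2K, so summand l
   is bounded by 2^l / l! uniformly in K.  Tannery's theorem (dominated
   convergence for sums whose length grows with K) then gives the limit
   sum_l s^l / l! = exp s. *)

Lemma four_h_add_mod2 (t : nat) : (4 * h t + t mod 2 = t * t)%nat.
Proof. induction t as [|t IH]; cbn [h]; nia. Qed.

Lemma h_double_le (t K : nat) : (t <= 2 * K)%nat -> (2 * h t <= t * K)%nat.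
Proof. pose proof (four_h_add_mod2 t). nia. Qed.

Lemma is_lim_seq_Rpower_INR_neg (a : R) :
  0 < a -> is_lim_seq (fun K => Rpower (INR K) (- a)) 0.
Proof.
  intros Ha. apply is_lim_seq_Reals. intros d Hd.
  destruct (INR_unbounded (exp (- ln d / a))) as [N HN].
  exists N. intros K HK. apply le_INR in HK.
  assert (HKpos : 0 < INR K) by (pose proof (exp_pos (- ln d / a)); lra).
  unfold R_dist, Rpower. rewrite Rminus_0_r, Rabs_pos_eq by (left; apply exp_pos).
  rewrite <- (exp_ln d Hd). apply exp_increasing.
  assert (Hln : - ln d / a < ln (INR K)).
  { rewrite <- (ln_exp (- ln d / a)). apply ln_increasing; [apply exp_pos | lra]. }
  apply (Rmult_lt_compat_l a) in Hln; [|exact Ha].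
  replace (a * (- ln d / a)) with (- ln d) in Hln by (field; lra). lra.
Qed.

Lemma is_lim_seq_of_Rabs_sub_lt (u v : nat -> R) (l : R) :
  eventually (fun n => Rabs (u n - l) < v n) -> is_lim_seq v 0 -> is_lim_seq u l.
Proof.
  intros Huv Hv. apply (is_lim_seq_le_le_loc (fun n => l - v n) u (fun n => l + v n)).
  - revert Huv. apply filter_imp. intros n Hn. apply Rabs_def2 in Hn. lra.
  - replace (Finite l) with (Rbar_minus l 0) by (simpl; f_equal; ring).
    apply is_lim_seq_minus'; [apply is_lim_seq_const | exact Hv].
  - replace (Finite l) with (Rbar_plus l 0) by (simpl; f_equal; ring).
    apply is_lim_seq_plus'; [apply is_lim_seq_const | exact Hv].
Qed.

Lemma is_lim_seq_div_INR_0 (m : R) : is_lim_seq (fun K => m / INR K) 0.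
Proof.
  rewrite <- (Rmult_0_r m). apply is_lim_seq_mult'; [apply is_lim_seq_const|].
  apply (is_lim_seq_inv _ _ is_lim_seq_INR). discriminate.
Qed.

Lemma eventually_le_of_ratio_lim (x : nat -> nat) (l : R) :
  l < 1 -> is_lim_seq (fun K => INR (x K) / INR K) l -> eventually (fun K => (x K <= K)%nat).
Proof.
  intros Hl Hx. apply is_lim_seq_spec in Hx.
  assert (Hgap : 0 < 1 - l) by lra.
  apply (filter_imp (fun K => (1 <= K)%nat /\ Rabs (INR (x K) / INR K - l) < mkposreal _ Hgap)).
  - intros K [HK1 HK]. apply Rabs_def2 in HK. simpl in HK.
    assert (HKpos : 0 < INR K) by (apply lt_0_INR; lia).
    assert (Hlt : INR (x K) < INR K).
    { apply (Rmult_lt_reg_r (/ INR K)); [apply Rinv_0_lt_compat, HKpos|].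
      rewrite Rinv_r by lra. unfold Rdiv in HK. lra. }
    apply INR_lt in Hlt. lia.
  - apply filter_and; [exists 1%nat; easy | apply Hx].
Qed.

Lemma is_lim_seq_deficit_ratio (x : nat -> R) (t n : nat) (s : R) :
  (1 <= t)%nat -> is_lim_seq (fun K => x K / INR K) (1 - s) ->
  is_lim_seq (fun K => (INR K - x K) / (INR t * INR K - INR n)) (s / INR t).
Proof.
  intros Ht Hx. assert (Htpos : 1 <= INR t) by (apply (le_INR 1); lia).
  apply is_lim_seq_ext_loc with (u := fun K => (1 - x K / INR K) / (INR t - INR n / INR K)).
  - exists (S n). intros K HK.
    assert (HnK : INR n < INR K) by (apply lt_INR; lia).
    pose proof (pos_INR n).
    field. split; nra.
  - replace (s / INR t) with ((1 - (1 - s)) / (INR t - 0)) by (field; lra).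
    apply is_lim_seq_div'; [| | lra].
    + apply is_lim_seq_minus'; [apply is_lim_seq_const | exact Hx].
    + apply is_lim_seq_minus'; [apply is_lim_seq_const | apply is_lim_seq_div_INR_0].
Qed.

Lemma Rabs_div_sub_h_le (K t : nat) (num : R) :
  (1 <= K)%nat -> (1 <= t <= 2 * K)%nat -> Rabs num <= INR K ->
  Rabs (num / (INR t * INR K - INR (h t))) <= 2 / INR t.
Proof.
  intros HK Ht Hnum.
  assert (Hh : 2 * INR (h t) <= INR t * INR K).
  { rewrite <- mult_INR. change 2 with (INR 2). rewrite <- mult_INR.
    apply le_INR, h_double_le. lia. }
  assert (HKpos : 1 <= INR K) by (apply (le_INR 1); lia).
  assert (Htpos : 1 <= INR t) by (apply (le_INR 1); lia).
  rewrite Rabs_div by nra. rewrite (Rabs_pos_eq (_ - _)) by nra.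
  apply (Rmult_le_reg_r (INR t * INR K - INR (h t))); [nra|].
  unfold Rdiv. rewrite Rmult_assoc, Rinv_l, Rmult_1_r by nra.
  apply Rle_trans with (INR K); [exact Hnum|].
  apply (Rmult_le_reg_l (INR t)); [lra|].
  field_simplify; nra.
Qed.

Lemma ind_odd_add_ind_even (t : nat) : ind_odd t + ind_even t = 1.
Proof.
  unfold ind_odd, ind_even. rewrite <- Nat.negb_odd.
  destruct (Nat.odd t); simpl; lra.
Qed.

Lemma is_lim_seq_fac (c r : nat -> nat) (s : R) (t : nat) : (1 <= t)%nat ->
  is_lim_seq (fun K => INR (c K) / INR K) (1 - s) ->
  is_lim_seq (fun K => INR (r K) / INR K) (1 - s) ->
  is_lim_seq (fun K => fac K (c K) (r K) t) (s / INR t).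
Proof.
  intros Ht Hc Hr.
  apply is_lim_seq_ext with (u := fun K =>
    (INR K - (INR (r K) * ind_odd t + INR (c K) * ind_even t + INR (t / 2)))
    / (INR t * INR K - INR (h t))).
  { intros K. unfold fac. f_equal. ring. }
  apply is_lim_seq_deficit_ratio; [exact Ht|].
  apply is_lim_seq_ext with (u := fun K =>
    INR (r K) / INR K * ind_odd t + INR (c K) / INR K * ind_even t + INR (t / 2) / INR K).
  { intros K. unfold Rdiv. ring. }
  replace (1 - s) with ((1 - s) * ind_odd t + (1 - s) * ind_even t + 0)
    by (pose proof (ind_odd_add_ind_even t); nra).
  apply is_lim_seq_plus'; [apply is_lim_seq_plus' | apply is_lim_seq_div_INR_0];
    apply is_lim_seq_mult'; auto using is_lim_seq_const.
Qed.

Lemma Rabs_fac_le (K c r t : nat) :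
  (1 <= K)%nat -> (c <= K)%nat -> (r <= K)%nat -> (1 <= t <= 2 * K)%nat ->
  Rabs (fac K c r t) <= 2 / INR t.
Proof.
  intros HK Hc Hr Ht. apply Rabs_div_sub_h_le; [exact HK | exact Ht |].
  apply le_INR in Hc, Hr. assert (Ht2 : INR (t / 2) <= INR K) by (apply le_INR; lia).
  pose proof (pos_INR c). pose proof (pos_INR r). pose proof (pos_INR (t / 2)).
  apply Rabs_le. unfold ind_odd, ind_even. rewrite <- Nat.negb_odd.
  destruct (Nat.odd t); cbn [negb]; lra.
Qed.

Lemma is_lim_seq_prod1 (f : nat -> nat -> R) (g : nat -> R) (l : nat) :
  (forall t, (1 <= t)%nat -> is_lim_seq (fun K => f K t) (g t)) ->
  is_lim_seq (fun K => prod1 (f K) l) (prod1 g l).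
Proof.
  intros Hf. induction l as [|l IH]; cbn [prod1].
  - apply is_lim_seq_const.
  - apply is_lim_seq_mult'; [exact IH | apply Hf; lia].
Qed.

Lemma Rabs_prod1_le (f g : nat -> R) (l : nat) :
  (forall t, (1 <= t <= l)%nat -> Rabs (f t) <= g t) -> Rabs (prod1 f l) <= prod1 g l.
Proof.
  induction l as [|l IH]; intros Hfg; cbn [prod1].
  - rewrite Rabs_R1. lra.
  - rewrite Rabs_mult. apply Rmult_le_compat; try apply Rabs_pos.
    + apply IH. intros t Ht. apply Hfg. lia.
    + apply Hfg. lia.
Qed.

Lemma inv_fact_pow_S (x : R) (l : nat) :
  / INR (fact (S l)) * x ^ S l = x / INR (S l) * (/ INR (fact l) * x ^ l).
Proof.
  rewrite fact_simpl, mult_INR. pose proof (INR_fact_neq_0 l).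
  assert (0 < INR (S l)) by (apply lt_0_INR; lia).
  simpl pow. field. lra.
Qed.

Lemma prod1_div_INR (x : R) (l : nat) :
  prod1 (fun t => x / INR t) l = / INR (fact l) * x ^ l.
Proof.
  induction l as [|l IH]; cbn [prod1].
  - simpl. lra.
  - rewrite IH, inv_fact_pow_S. ring.
Qed.

Definition expr_term (K c r l : nat) : R :=
  match l with
  | O => 1
  | S l => (INR K - INR c) / (INR (S l) * INR K - INR (h (S l))) * prod1 (fac K c r) l
  end.

Lemma expr_eq_sum_expr_term (K c r : nat) :
  (1 <= K)%nat -> expr K c r = sum_f_R0 (expr_term K c r) (2 * K - 1).
Proof.
  intros HK. rewrite decomp_sum by lia.
  replace (pred (2 * K - 1)) with (2 * K - 2)%nat by lia.
  unfold expr. f_equal. apply sum_eq. intros l _.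
  rewrite Nat.add_1_r. reflexivity.
Qed.

Lemma is_lim_seq_expr_term (c r : nat -> nat) (s : R) (l : nat) :
  is_lim_seq (fun K => INR (c K) / INR K) (1 - s) ->
  is_lim_seq (fun K => INR (r K) / INR K) (1 - s) ->
  is_lim_seq (fun K => expr_term K (c K) (r K) l) (/ INR (fact l) * s ^ l).
Proof.
  intros Hc Hr. destruct l as [|l]; cbn [expr_term].
  - replace (/ INR (fact 0) * s ^ 0) with 1 by (simpl; field). apply is_lim_seq_const.
  - rewrite inv_fact_pow_S, <- prod1_div_INR. apply is_lim_seq_mult'.
    + apply is_lim_seq_deficit_ratio; [lia | exact Hc].
    + apply is_lim_seq_prod1. intros t Ht. apply is_lim_seq_fac; assumption.
Qed.

Lemma Rabs_expr_term_le (K c r l : nat) :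
  (1 <= K)%nat -> (c <= K)%nat -> (r <= K)%nat -> (l <= 2 * K)%nat ->
  Rabs (expr_term K c r l) <= / INR (fact l) * 2 ^ l.
Proof.
  intros HK Hc Hr Hl. destruct l as [|l]; cbn [expr_term].
  - rewrite Rabs_R1. simpl. lra.
  - rewrite inv_fact_pow_S, <- prod1_div_INR, Rabs_mult.
    apply Rmult_le_compat; try apply Rabs_pos.
    + apply Rabs_div_sub_h_le; [exact HK | lia |].
      apply le_INR in Hc. pose proof (pos_INR c). apply Rabs_le. lra.
    + apply Rabs_prod1_le. intros t Ht. apply Rabs_fac_le; lia.
Qed.

Lemma is_lim_seq_sum_f_R0 (u : nat -> nat -> R) (a : nat -> R) (N : nat) :
  (forall l, is_lim_seq (fun K => u K l) (a l)) ->
  is_lim_seq (fun K => sum_f_R0 (u K) N) (sum_f_R0 a N).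
Proof.
  intros Hu. induction N as [|N IH]; cbn [sum_f_R0].
  - apply Hu.
  - apply is_lim_seq_plus'; [exact IH | apply Hu].
Qed.

Lemma Rabs_sum_f_R0_sub_le (f M : nat -> R) (m n : nat) : (m < n)%nat ->
  (forall l, (m < l <= n)%nat -> Rabs (f l) <= M l) ->
  Rabs (sum_f_R0 f n - sum_f_R0 f m) <= sum_f_R0 M n - sum_f_R0 M m.
Proof.
  intros Hmn HfM. rewrite (tech2 f m n), (tech2 M m n) by exact Hmn.
  replace (sum_f_R0 f m + _ - sum_f_R0 f m) with
    (sum_f_R0 (fun i => f (S m + i)%nat) (n - S m)) by ring.
  replace (sum_f_R0 M m + _ - sum_f_R0 M m) with
    (sum_f_R0 (fun i => M (S m + i)%nat) (n - S m)) by ring.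
  eapply Rle_trans; [apply Rsum_abs|]. apply sum_Rle. intros i Hi. apply HfM. lia.
Qed.

Lemma tannery (u : nat -> nat -> R) (a M : nat -> R) (n : nat -> nat) (la LM : R) :
  (forall l, is_lim_seq (fun K => u K l) (a l)) ->
  eventually (fun K => forall l, (l <= n K)%nat -> Rabs (u K l) <= M l) ->
  (forall N, eventually (fun K => (N <= n K)%nat)) ->
  is_lim_seq (sum_f_R0 a) la -> is_lim_seq (sum_f_R0 M) LM ->
  is_lim_seq (fun K => sum_f_R0 (u K) (n K)) la.
Proof.
  intros Hu [K0 Hdom] Hn Ha HM. apply is_lim_seq_Reals. intros e He.
  apply is_lim_seq_Reals in Ha, HM.
  destruct (Ha (e / 3) ltac:(lra)) as [Na HNa].
  destruct (CV_Cauchy _ (exist _ LM HM) (e / 3) ltac:(lra)) as [Nm HNm].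
  set (N0 := max Na Nm).
  destruct (proj1 (is_lim_seq_Reals _ _) (is_lim_seq_sum_f_R0 u a N0 Hu) (e / 3) ltac:(lra))
    as [K1 HK1].
  destruct (Hn (S N0)) as [K2 HK2].
  exists (max K0 (max K1 K2)). intros K HK.
  assert (Htail : Rabs (sum_f_R0 (u K) (n K) - sum_f_R0 (u K) N0)
                  <= sum_f_R0 M (n K) - sum_f_R0 M N0).
  { apply Rabs_sum_f_R0_sub_le; [apply HK2; lia |].
    intros l Hl. apply Hdom; lia. }
  specialize (HNa N0 ltac:(lia)). specialize (HK1 K ltac:(lia)).
  specialize (HNm (n K) N0 ltac:(specialize (HK2 K ltac:(lia)); lia) ltac:(lia)).
  unfold R_dist in *. apply Rabs_le_between in Htail.
  apply Rabs_def2 in HNa. apply Rabs_def2 in HK1. apply Rabs_def2 in HNm.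
  apply Rabs_def1; lra.
Qed.

Theorem lemma7p2 (eps : R) (c r : nat -> nat)
  (Heps : 0 < eps < 1 / 2)
  (Hc : forall K : nat, (2 <= K)%nat ->
     (0 < c K)%nat /\
     Rabs (INR (c K) / INR K - (1 - sqrt (1 - 2 * eps))) < Rpower (INR K) (- (1 / 4)))
  (Hr : forall K : nat, (2 <= K)%nat ->
     (0 < r K)%nat /\
     Rabs (INR (r K) / INR K - (1 - sqrt (1 - 2 * eps))) < Rpower (INR K) (- (1 / 4))) :
  Un_cv (fun K : nat => expr K (c K) (r K)) (exp (sqrt (1 - 2 * eps))).
Proof.
  set (s := sqrt (1 - 2 * eps)) in *.
  assert (Hs : 0 < s) by (apply sqrt_lt_R0; lra).
  assert (Hdecay := is_lim_seq_Rpower_INR_neg (1 / 4) ltac:(lra)).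
  assert (Hclim : is_lim_seq (fun K => INR (c K) / INR K) (1 - s)).
  { refine (is_lim_seq_of_Rabs_sub_lt _ _ _ _ Hdecay). exists 2%nat. intros K HK. exact (proj2 (Hc K HK)). }
  assert (Hrlim : is_lim_seq (fun K => INR (r K) / INR K) (1 - s)).
  { refine (is_lim_seq_of_Rabs_sub_lt _ _ _ _ Hdecay). exists 2%nat. intros K HK. exact (proj2 (Hr K HK)). }
  apply is_lim_seq_Reals.
  apply is_lim_seq_ext_loc with (u := fun K => sum_f_R0 (expr_term K (c K) (r K)) (2 * K - 1)).
  { exists 1%nat. intros K HK. symmetry. apply expr_eq_sum_expr_term, HK. }
  apply (tannery _ (fun l => / INR (fact l) * s ^ l) (fun l => / INR (fact l) * 2 ^ l)
           _ _ (exp 2)).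
  - intros l. apply is_lim_seq_expr_term; assumption.
  - assert (Hcle := eventually_le_of_ratio_lim c (1 - s) ltac:(lra) Hclim).
    assert (Hrle := eventually_le_of_ratio_lim r (1 - s) ltac:(lra) Hrlim).
    apply (filter_imp (fun K => (1 <= K)%nat /\ (c K <= K)%nat /\ (r K <= K)%nat)).
    + intros K (HK & HcK & HrK) l Hl. apply Rabs_expr_term_le; lia.
    + apply filter_and; [exists 1%nat; easy | apply filter_and; assumption].
  - intros N. exists N. intros K HK. lia.
  - apply is_lim_seq_Reals, E1_cvg.
  - apply is_lim_seq_Reals, E1_cvg.
Qed.
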